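(* Fix an integer $\ell\ge1$. For real $k\ge 0$ let $F_k(p)=(1-p)^{-k}\sum_{j=1}^{\ell}\binom{\ell}{j}\frac{1}{1-(1-2p)^j}$ for $p\in(0,1)$. Then, as $k\to\infty$, \[ \min_{p\in(0,1)}F_k(p)=(1+o(1))\,2^\ell e\,(bk+a), \] and also $\min_{x>0}e^x\left(\frac{bk}{x}+a\right)=(1+o(1))\,e\,(bk+a)$.
   Context: $s(\ell)=\sum_{j=1}^\ell\binom{\ell}{j}\frac1j$, $a=\frac12-\frac{1+s(\ell)}{2^{\ell+1}}$, $b=\frac{s(\ell)}{2^{\ell+1}}$. For $k=m\ell$, $F_k(p)$ is the expected number of iterations of the (1+1) EA with mutation rate $p$ on BlockLeadingOnes with block length $\ell$ to go from the first moment the fitness equals $m$ to the first moment it exceeds $m$ (this may be $0$). *)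

From HB Require Import structures.
From mathcomp Require Import all_boot all_order all_algebra.
From mathcomp Require Import all_classical all_reals all_analysis.
Set Implicit Arguments. Unset Strict Implicit. Unset Printing Implicit Defensive.
Import Order.TTheory GRing.Theory Num.Theory.
Import numFieldNormedType.Exports.
Local Open Scope classical_set_scope.
Local Open Scope ring_scope.

Section Defs.
Variable R : realType.

Definition s_coef (l : nat) : R :=
  \sum_(1 <= j < l.+1) ('C(l, j)%:R / j%:R).

Definition a_coef (l : nat) : R := 2^-1 - (1 + s_coef l) / 2 ^+ l.+1.

Definition b_coef (l : nat) : R := s_coef l / 2 ^+ l.+1.

Definition Fk (l : nat) (k p : R) : R :=
  powR (1 - p) (- k) * \sum_(1 <= j < l.+1) ('C(l, j)%:R / (1 - (1 - 2 * p) ^+ j)).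

Definition minFk (l : nat) (k : R) : R :=
  inf [set y | exists p : R, [/\ 0 < p, p < 1 & y = Fk l k p]].

Definition minG (l : nat) (k : R) : R :=
  inf [set y | exists x : R, 0 < x /\ y = expR x * (b_coef l * k / x + a_coef l)].

End Defs.

From HB Require Import structures.
From mathcomp Require Import all_boot all_order all_algebra.
From mathcomp Require Import all_classical all_reals all_analysis.
From mathcomp.algebra_tactics Require Import ring lra.
Set Implicit Arguments. Unset Strict Implicit. Unset Printing Implicit Defensive.
Import Order.TTheory GRing.Theory Num.Theory.
Import numFieldNormedType.Exports.
Local Open Scope classical_set_scope.
Local Open Scope ring_scope.

(* Asymptotics of the optimal expected time of the (1+1) EA on one block of  *)
(* BlockLeadingOnes.  Write F_k(p) = (1-p)^(-k) * H(p) with                 *)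
(* H(p) = sum_{j=1}^l C(l,j) / (1 - (1-2p)^j), s = s(l), b = s / 2^(l+1).   *)
(* The proof is a squeeze at the level of explicit bounds:                  *)
(*  - each summand obeys 2jp(1-2lp) <= 1-(1-2p)^j <= 2jp (Bernoulli and the *)
(*    geometric sum), so s/(2p) <= H(p) <= s/(2p(1-2lp));                   *)
(*  - e^(kp) <= (1-p)^(-k) <= e^(kp/(1-p)) (from ln(1+x) <= x);             *)
(*  - hence F_k(p) >= e^(kp) s/(2p) >= e k s/2 = 2^l e b k for every p,     *)
(*    while at p = 1/k, F_k(1/k) <= 2^l e b k * e^(1/(k-1)) / (1 - 2l/k);   *)
(*  - similarly e b k <= min_x e^x (bk/x + a) <= e (bk + a) (take x = 1).   *)
(* Since a >= 0 and b > 0, both normalised minima are squeezed between      *)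
(* bk/(bk+a) and e^(1/(k-1))/(1-2l/k) (resp. 1), all of which tend to 1.    *)

Section ElementaryBounds.
Variable R : realFieldType.

Lemma bernoulli_ineq (x : R) n : -1 <= x -> 1 + n%:R * x <= (1 + x) ^+ n.
Proof.
move=> x_ge; elim: n => [|n IHn]; first by rewrite mul0r addr0 expr0.
have Dx_ge0 : 0 <= 1 + x by lra.
have n_ge0 : 0 <= n%:R :> R by rewrite ler0n.
have := ler_wpM2l Dx_ge0 IHn; rewrite exprS -natr1; nra.
Qed.

Lemma one_subX (q : R) j : 1 - q ^+ j = (1 - q) * \sum_(i < j) q ^+ i.
Proof. by rewrite -opprB subrX1 -mulNr opprB. Qed.

Lemma geom_sum_le (q : R) j : `|q| <= 1 -> \sum_(i < j) q ^+ i <= j%:R.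
Proof.
move=> q_le1; have -> : j%:R = \sum_(i < j) (1 : R) by rewrite sumr_const card_ord.
apply: ler_sum => i _.
by apply: le_trans (ler_norm _) _; rewrite normrX exprn_ile1.
Qed.

(* For 0 <= q <= 1 every term q^i, i < j <= n, is at least 1 - n(1-q). *)
Lemma geom_sum_ge (q : R) j n : 0 <= q <= 1 -> (j <= n)%N ->
  j%:R * (1 - n%:R * (1 - q)) <= \sum_(i < j) q ^+ i.
Proof.
move=> /andP[q_ge0 q_le1] jn.
rewrite -[j in j%:R]card_ord mulr_natl -sumr_const.
apply: ler_sum => i _.
have i_le_n : i%:R <= n%:R :> R by rewrite ler_nat (leq_trans (ltnW (ltn_ord i))).
have bern : 1 + i%:R * (q - 1) <= q ^+ i.
  by have := @bernoulli_ineq (q - 1) i; rewrite (addrC 1 (q - 1)) subrK; apply; lra.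
have : i%:R * (1 - q) <= n%:R * (1 - q) by rewrite ler_wpM2r ?subr_ge0.
lra.
Qed.

Lemma one_sub_pow_le (p : R) j : 0 < p < 1 -> (0 < j)%N ->
  0 < 1 - (1 - 2 * p) ^+ j <= 2 * j%:R * p.
Proof.
move=> /andP[p_gt0 p_lt1] j_gt0.
have q_lt1 : `|1 - 2 * p| < 1 by rewrite ltr_norml; apply/andP; split; lra.
apply/andP; split.
  rewrite subr_gt0; apply: le_lt_trans (ler_norm _) _.
  by rewrite normrX exprn_ilt1 // -lt0n.
rewrite one_subX (_ : 1 - (1 - 2 * p) = 2 * p); last by ring.
rewrite (_ : 2 * j%:R * p = 2 * p * j%:R); last by ring.
by rewrite ler_wpM2l ?geom_sum_le ?ltW //; lra.
Qed.

Lemma one_sub_pow_ge (p : R) j l : 0 <= p -> 2 * l%:R * p <= 1 -> (j <= l)%N ->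
  2 * j%:R * p * (1 - 2 * l%:R * p) <= 1 - (1 - 2 * p) ^+ j.
Proof.
move=> p_ge0 lp_le1 jl.
have [l0 | l_gt0] := posnP l.
  by move: jl; rewrite l0 leqn0 => /eqP->; rewrite mulr0 !mul0r expr0 subrr.
have p_le : 2 * p <= 1.
  have : 2 * p <= 2 * l%:R * p by rewrite -mulrA ler_wpM2l // ler_peMl ?ler1n.
  lra.
rewrite one_subX (_ : 1 - (1 - 2 * p) = 2 * p); last by ring.
rewrite (_ : _ * (1 - _) = 2 * p * (j%:R * (1 - l%:R * (1 - (1 - 2 * p)))));
  last by ring.
rewrite ler_wpM2l ?mulr_ge0 //; apply: geom_sum_ge => //; apply/andP; split; lra.
Qed.

End ElementaryBounds.

Section ExpBounds.
Variable R : realType.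

Lemma expR_ge_mul_e (x : R) : expR 1 * x <= expR x.
Proof.
rewrite -[in leRHS](subrK 1 x) expRD mulrC ler_wpM2r ?expR_ge0 //.
by have := expR_ge1Dx (x - 1); lra.
Qed.

(* Exponential bounds on (1-p)^(-k), from ln(1+x) <= x. *)
Lemma powR_neg_ge (k p : R) : 0 <= k -> 0 < p < 1 ->
  expR (k * p) <= powR (1 - p) (- k).
Proof.
move=> k_ge0 /andP[p_gt0 p_lt1]; rewrite /powR gt_eqF ?subr_gt0 // ler_expR.
have : ln (1 - p) <= - p by apply: le_ln1Dx; lra.
nra.
Qed.

Lemma powR_neg_le (k p : R) : 0 <= k -> 0 < p < 1 ->
  powR (1 - p) (- k) <= expR (k * (p / (1 - p))).
Proof.
move=> k_ge0 /andP[p_gt0 p_lt1].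
have q_gt0 : 0 < 1 - p by lra.
rewrite /powR gt_eqF // ler_expR mulNr -mulrN -lnV ?posrE //.
have inv_q : (1 - p)^-1 = 1 + p / (1 - p) by field; lra.
rewrite ler_wpM2l // {1}inv_q.
by apply: le_ln1Dx; apply: lt_le_trans (divr_ge0 (ltW p_gt0) (ltW q_gt0)); lra.
Qed.

End ExpBounds.

(* Sign facts on s, a, b; a >= 0 is what makes bk/(bk+a) a lower bound <= 1 *)
(* and lets the upper bounds absorb the constant term a.                     *)
Section Coefficients.
Variables (R : realType) (l : nat).

Lemma s_coef_ge0 : 0 <= s_coef R l.
Proof. by apply: sumr_ge0 => j _; rewrite divr_ge0. Qed.

Lemma s_coef_gt0 : (1 <= l)%N -> 0 < s_coef R l.
Proof.
move=> l_ge1; rewrite /s_coef big_ltn // bin1 divr1 ltr_wpDr ?ltr0n //.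
by apply: sumr_ge0 => j _; rewrite divr_ge0.
Qed.

(* s(l) + 1 <= sum_j C(l,j) = 2^l, since each C(l,j)/j <= C(l,j). *)
Lemma s_coef_add1_le : s_coef R l + 1 <= 2 ^+ l.
Proof.
have -> : (2 : R) ^+ l = \sum_(0 <= j < l.+1) 'C(l, j)%:R.
  by rewrite -natrX -[2%N]/(1 + 1)%N expnDn big_mkord natr_sum;
    apply: eq_bigr => j _; rewrite !exp1n !muln1.
rewrite big_ltn // bin0 addrC lerD2l /s_coef !big_nat.
apply: ler_sum => j /andP[j_ge1 _].
by rewrite ler_pdivrMr ?ltr0n // ler_peMr ?ler1n.
Qed.

Lemma a_coef_ge0 : 0 <= a_coef R l.
Proof.
have := s_coef_add1_le; have two_l_gt0 : 0 < (2 : R) ^+ l by rewrite exprn_gt0.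
rewrite /a_coef subr_ge0 exprS ler_pdivrMr ?mulr_gt0 // => le_2l.
by rewrite mulrA mulVf ?mul1r; lra.
Qed.

Lemma b_coef_gt0 : (1 <= l)%N -> 0 < b_coef R l.
Proof. by move=> l_ge1; rewrite divr_gt0 ?exprn_gt0 ?s_coef_gt0. Qed.

Lemma b_coef_scaled : 2 ^+ l * b_coef R l = s_coef R l / 2.
Proof.
by rewrite /b_coef exprS; field; rewrite expf_neq0 ?pnatr_eq0.
Qed.

End Coefficients.

Section HittingTime.
Variables (R : realType) (l : nat).

Definition hit_sum (p : R) : R :=
  \sum_(1 <= j < l.+1) ('C(l, j)%:R / (1 - (1 - 2 * p) ^+ j)).

Lemma Fk_hit_sum (k p : R) : Fk l k p = powR (1 - p) (- k) * hit_sum p.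
Proof. by []. Qed.

Lemma hit_sum_ge (p : R) : 0 < p < 1 -> s_coef R l / (2 * p) <= hit_sum p.
Proof.
move=> p_01; rewrite /s_coef /hit_sum mulr_suml !big_nat; apply: ler_sum => j /andP[j_ge1 _].
have /andP[t_gt0 t_le] := one_sub_pow_le p_01 j_ge1.
rewrite -mulrA -invfM ler_wpM2l // lef_pV2 ?posrE //; last first.
  by rewrite mulr_gt0 ?ltr0n //; case/andP: p_01 => *; lra.
by rewrite (le_trans t_le) // mulrA [j%:R * 2]mulrC.
Qed.

Lemma hit_sum_le (p : R) : 0 < p < 1 -> 2 * l%:R * p < 1 ->
  hit_sum p <= s_coef R l / (2 * p * (1 - 2 * l%:R * p)).
Proof.
move=> p_01 lp_lt1; have /andP[p_gt0 _] := p_01.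
rewrite /s_coef /hit_sum mulr_suml !big_nat; apply: ler_sum => j /andP[j_ge1 j_le].
have /andP[t_gt0 _] := one_sub_pow_le p_01 j_ge1.
have t_ge := one_sub_pow_ge (ltW p_gt0) (ltW lp_lt1) j_le.
rewrite -[leRHS]mulrA -invfM ler_wpM2l // lef_pV2 ?posrE //.
  suff -> : j%:R * (2 * p * (1 - 2 * l%:R * p)) = 2 * j%:R * p * (1 - 2 * l%:R * p)
    by []; ring.
by rewrite !mulr_gt0 ?ltr0n //; lra.
Qed.

(* Lower bound, uniform in p: F_k(p) >= e^(kp) s/(2p) >= e k s / 2. *)
Lemma Fk_ge (k p : R) : 0 < k -> 0 < p < 1 -> expR 1 * k * (s_coef R l / 2) <= Fk l k p.
Proof.
move=> k_gt0 p_01; have /andP[p_gt0 _] := p_01.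
have sp_ge0 : 0 <= s_coef R l / (2 * p) by apply: divr_ge0; [exact: s_coef_ge0 | lra].
have F_ge : expR (k * p) * (s_coef R l / (2 * p)) <= Fk l k p.
  by rewrite Fk_hit_sum ler_pM ?expR_ge0 ?powR_neg_ge ?hit_sum_ge // ltW.
apply: le_trans (le_trans (ler_wpM2r sp_ge0 (expR_ge_mul_e (k * p))) F_ge).
suff -> : expR 1 * (k * p) * (s_coef R l / (2 * p)) = expR 1 * k * (s_coef R l / 2) by [].
by field; lra.
Qed.

Lemma Fk_le (k p : R) : 0 <= k -> 0 < p < 1 -> 2 * l%:R * p < 1 ->
  Fk l k p <= expR (k * (p / (1 - p))) * (s_coef R l / (2 * p * (1 - 2 * l%:R * p))).
Proof.
move=> k_ge0 p_01 lp_lt1; have /andP[p_gt0 _] := p_01.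
rewrite Fk_hit_sum ler_pM ?powR_ge0 ?powR_neg_le ?hit_sum_le //.
by apply: le_trans (hit_sum_ge p_01); apply: divr_ge0; [exact: s_coef_ge0 | lra].
Qed.

End HittingTime.

Section Minima.
Variables (R : realType) (l : nat).
Hypothesis l_ge1 : (1 <= l)%N.

Local Notation b := (b_coef R l).
Local Notation a := (a_coef R l).

Let b_gt0 : 0 < b := b_coef_gt0 R l_ge1.
Let a_ge0 : 0 <= a := a_coef_ge0 R l.

Let bka_gt0 (k : R) : 0 < k -> 0 < b * k + a.
Proof. by move=> k_gt0; rewrite ltr_wpDr // mulr_gt0. Qed.

Lemma e_b_scaled (k : R) : 2 ^+ l * expR 1 * (b * k) = expR 1 * k * (s_coef R l / 2).
Proof. by rewrite -b_coef_scaled; ring. Qed.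

Lemma minFk_ge (k : R) : 0 < k -> 2 ^+ l * expR 1 * (b * k) <= minFk l k.
Proof.
move=> k_gt0; rewrite e_b_scaled.
apply: lb_le_inf; first by exists (Fk l k 2^-1), 2^-1; split=> //; lra.
by move=> _ [p [p_gt0 p_lt1 ->]]; apply: Fk_ge => //; apply/andP.
Qed.

(* The choice p = 1/k: F_k(1/k) <= 2^l e b k * e^(1/(k-1)) / (1 - 2l/k). *)
Lemma minFk_le (k : R) : 2 * l%:R < k ->
  minFk l k <= 2 ^+ l * expR 1 * (b * k + a) *
               (expR (k^-1 / (1 - k^-1)) / (1 - 2 * l%:R * k^-1)).
Proof.
move=> lk; have l_ge1R : 1 <= l%:R :> R by rewrite ler1n.
have k_gt0 : 0 < k by lra.
have p_gt0 : 0 < k^-1 by rewrite invr_gt0.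
have lp_lt1 : 2 * l%:R * k^-1 < 1 by rewrite ltr_pdivrMr // mul1r.
have p_lt1 : k^-1 < 1 by rewrite invf_lt1 //; lra.
have p_01 : 0 < k^-1 < 1 by apply/andP.
have E_ge0 : 0 <= expR (k^-1 / (1 - k^-1)) / (1 - 2 * l%:R * k^-1).
  by rewrite divr_ge0 ?expR_ge0 // subr_ge0 ltW.
have F_le : Fk l k k^-1 <= 2 ^+ l * expR 1 * (b * k) *
    (expR (k^-1 / (1 - k^-1)) / (1 - 2 * l%:R * k^-1)).
  apply: le_trans (Fk_le (ltW k_gt0) p_01 lp_lt1) _.
  have -> : k * (k^-1 / (1 - k^-1)) = 1 + k^-1 / (1 - k^-1) by field; lra.
  rewrite expRD e_b_scaled le_eqVlt; apply/orP; left.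
  by apply/eqP; field; lra.
have min_le : minFk l k <= Fk l k k^-1.
  apply: ge_inf; last by exists k^-1.
  exists 0 => _ [p [p_gt0' p_lt1' ->]]; apply: le_trans (Fk_ge l k_gt0 _); last exact/andP.
  by rewrite !mulr_ge0 ?expR_ge0 ?divr_ge0 ?s_coef_ge0 // ltW.
apply: le_trans min_le (le_trans F_le _).
by rewrite ler_wpM2r // ler_wpM2l ?mulr_ge0 ?expR_ge0 ?exprn_ge0 // lerDl.
Qed.

(* e^x (bk/x + a) >= e^x bk/x >= e b k, and x = 1 gives the upper bound. *)
Lemma minG_ge (k : R) : 0 < k -> expR 1 * (b * k) <= minG l k.
Proof.
move=> k_gt0; apply: lb_le_inf; first by exists (expR 1 * (b * k / 1 + a)), 1.
move=> _ [x [x_gt0 ->]].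
have bkx_ge0 : 0 <= b * k / x by rewrite divr_ge0 // ltW // mulr_gt0.
have drop_a : expR x * (b * k / x) <= expR x * (b * k / x + a).
  by rewrite ler_wpM2l ?expR_ge0 // lerDl.
apply: le_trans drop_a.
apply: le_trans (ler_wpM2r bkx_ge0 (expR_ge_mul_e x)).
by rewrite le_eqVlt; apply/orP; left; apply/eqP; field; lra.
Qed.

Lemma minG_le (k : R) : 0 < k -> minG l k <= expR 1 * (b * k + a).
Proof.
move=> k_gt0; rewrite -[b * k]divr1; apply: ge_inf; last by exists 1.
exists 0 => _ [x [x_gt0 ->]].
have bkx_ge0 : 0 <= b * k / x by rewrite divr_ge0 // ltW // mulr_gt0.
by rewrite mulr_ge0 ?expR_ge0 // addr_ge0.
Qed.

Lemma normalised_ge (m c k : R) : 0 < c -> 0 < k -> c * (b * k) <= m ->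
  b * k / (b * k + a) <= m / (c * (b * k + a)).
Proof.
move=> c_gt0 k_gt0 m_ge; have bk_gt0 : 0 < b * k by rewrite mulr_gt0.
rewrite ler_pdivlMr ?mulr_gt0 ?bka_gt0 //; apply: le_trans m_ge.
by rewrite le_eqVlt; apply/orP; left; apply/eqP; field; rewrite !lt0r_neq0 ?bka_gt0.
Qed.

Lemma minFk_normalised (k : R) : 2 * l%:R < k ->
  b * k / (b * k + a) <= minFk l k / (2 ^+ l * expR 1 * (b * k + a))
                      <= expR (k^-1 / (1 - k^-1)) / (1 - 2 * l%:R * k^-1).
Proof.
move=> lk; have k_gt0 : 0 < k by apply: le_lt_trans lk; rewrite mulr_ge0.
have D_gt0 : 0 < 2 ^+ l * expR 1 :> R by apply: mulr_gt0; [exact: exprn_gt0 | exact: expR_gt0].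
rewrite normalised_ge ?minFk_ge //= ler_pdivrMr ?mulr_gt0 ?bka_gt0 //.
by rewrite mulrC minFk_le.
Qed.

Lemma minG_normalised (k : R) : 0 < k ->
  b * k / (b * k + a) <= minG l k / (expR 1 * (b * k + a)) <= 1.
Proof.
move=> k_gt0.
rewrite normalised_ge ?expR_gt0 ?minG_ge //= ler_pdivrMr ?mulr_gt0 ?expR_gt0 ?bka_gt0 //.
by rewrite mul1r minG_le.
Qed.

End Minima.

Section Limits.
Variable R : realType.

(* Both limits are values at 0 of continuous functions of 1/k. *)
Lemma inv_cvg0_pinfty : (fun k : R => k^-1) @ +oo --> 0.
Proof.
by apply/(@gtr0_cvgV0 R R _ _ id); [exact: nbhs_pinfty_gt | exact: cvg_id].
Qed.

Lemma cvg_comp_inv_pinfty (f : R -> R) :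
  {for 0, continuous f} -> (fun k => f k^-1) @ +oo --> f 0.
Proof. by move=> f_cont; apply: continuous_cvg f_cont inv_cvg0_pinfty. Qed.

(* bk/(bk+a) = b/(b + a/k) tends to 1. *)
Lemma affine_ratio_cvg1 (b a : R) : 0 < b -> (fun k => b * k / (b * k + a)) @ +oo --> (1 : R).
Proof.
move=> b_gt0.
have f_cont : {for 0, continuous (fun x : R => b / (b + a * x))}.
  apply: cvgM; first exact: cvg_cst.
  apply: cvgV; first by rewrite mulr0 addr0 gt_eqF.
  by apply: cvgD; [exact: cvg_cst | apply: cvgM; [exact: cvg_cst | exact: cvg_id]].
have := cvg_comp_inv_pinfty f_cont; rewrite mulr0 addr0 divff ?gt_eqF //.
apply: cvg_trans; apply: near_eq_cvg; near=> k.
have k_gt0 : 0 < k by near: k; apply: nbhs_pinfty_gt; exact: num_real.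
have k_neq0 := lt0r_neq0 k_gt0.
rewrite (_ : b * k + a = (b + a / k) * k); last by rewrite mulrDl mulfVK.
by rewrite invfM mulrACA mulfV // mulr1.
Unshelve. all: by end_near.
Qed.

(* e^(1/(k-1)) / (1 - c/k) = g(1/k) with g(x) = e^(x/(1-x)) / (1 - c x). *)
Lemma exp_correction_cvg1 (c : R) :
  (fun k : R => expR (k^-1 / (1 - k^-1)) / (1 - c * k^-1)) @ +oo --> (1 : R).
Proof.
have g_cont : {for 0, continuous (fun x : R => expR (x / (1 - x)) / (1 - c * x))}.
  apply: cvgM.
    apply: continuous_cvg; first exact: continuous_expR.
    apply: cvgM; first exact: cvg_id.
    apply: cvgV; first by rewrite subr0 oner_neq0.
    by apply: cvgB; [exact: cvg_cst | exact: cvg_id].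
  apply: cvgV; first by rewrite mulr0 subr0 oner_neq0.
  by apply: cvgB; [exact: cvg_cst | apply: cvgM; [exact: cvg_cst | exact: cvg_id]].
by have := cvg_comp_inv_pinfty g_cont; rewrite mul0r expR0 mulr0 subr0 invr1 mulr1.
Qed.

End Limits.

Theorem mainTheorem17 (R : realType) (l : nat) (hl : (1 <= l)%N) :
  (fun k : R => minFk (R:=R) l k / (2 ^+ l * expR 1 * (b_coef R l * k + a_coef R l)))
     @ +oo --> (1 : R)
  /\
  (fun k : R => minG (R:=R) l k / (expR 1 * (b_coef R l * k + a_coef R l)))
     @ +oo --> (1 : R).
Proof.
have lower := affine_ratio_cvg1 (a_coef R l) (b_coef_gt0 R hl).
split.
- apply: (squeeze_cvgr _ lower (exp_correction_cvg1 (2 * l%:R))).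
  near=> k; have lk : 2 * l%:R < k by near: k; apply: nbhs_pinfty_gt; exact: num_real.
  exact: minFk_normalised.
- apply: (squeeze_cvgr _ lower (cvg_cst (1 : R))).
  near=> k; have k_gt0 : 0 < k by near: k; apply: nbhs_pinfty_gt; exact: num_real.
  exact: minG_normalised.
Unshelve. all: by end_near.
Qed.
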